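(* Let $L$ be a number field, $\Gamma$ an order of $L$, $K\subseteq L$ a subfield with ring of integers $\mathcal O_K$ and $n=[L:K]$, and $R=\mathrm M_n(\mathcal O_K)$. For each ring morphism $\rho:\Gamma\to R$ there exists a unique ring morphism $\varphi:K\to L$ such that $\rho$ is $\varphi$-compatible. In particular $\operatorname{Hom}(\Gamma,R)/R^\times=\bigsqcup_\varphi\bigl(\operatorname{Hom}_\varphi(\Gamma,R)/R^\times\bigr)$, the disjoint union over all ring morphisms $\varphi:K\to L$.
   Context: For a ring morphism $\varphi:K\to L$, regard $L$ as a $K$-algebra via $\varphi$ and $\mathrm M_n(K)$ as a $K$-algebra via scalar matrices. A ring morphism $\rho:\Gamma\to R$ is $\varphi$-compatible if $\rho\otimes\mathbb Q:L=\Gamma\otimes_{\mathbb Z}\mathbb Q\to R\otimes_{\mathbb Z}\mathbb Q=\mathrm M_n(K)$ is a morphism of $K$-algebras. $\operatorname{Hom}_\varphi(\Gamma,R)$ is the set of $\varphi$-compatible ring morphisms, stable under conjugation by $R^\times$. *)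

From HB Require Import structures.
From mathcomp Require Import all_boot all_order all_algebra all_field.
Set Implicit Arguments. Unset Strict Implicit. Unset Printing Implicit Defensive.
Import GRing.Theory.
Local Open Scope ring_scope.

(* Number field: L : fieldExtType rat (finite-dimensional over Q). *)

Definition integralZ (R : comNzRingType) (x : R) : Prop :=
  exists p : {poly int}, p \is monic /\ (map_poly (intr : int -> R) p).[x] = 0.

Definition is_order (L : fieldExtType rat) (G : {pred L}) : Prop :=
  [/\ 1 \in G,
      {in G &, forall x y, x * y \in G} &
      exists b : (\dim {:L}).-tuple L,
        basis_of fullv b /\
        forall x, x \in G <->
          exists z : 'I_(\dim {:L}) -> int, x = \sum_i (z i)%:~R *: b`_i].

Section Defs.
Variables (L : fieldExtType rat) (K : {subfield L}).

Definition degLK : nat := \dim_K {:L}.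

Definition mxOK (M : 'M[subvs_of K]_degLK) : Prop :=
  forall i j, integralZ (M i j).

Definition ring_hom_order (G : {pred L}) (rho : L -> 'M[subvs_of K]_degLK) : Prop :=
  [/\ forall x, x \in G -> mxOK (rho x),
      rho 1 = 1%:M,
      {in G &, forall x y, rho (x + y) = rho x + rho y} &
      {in G &, forall x y, rho (x * y) = rho x *m rho y}].

(* f : L -> M_n(K) is rho (x) Q, i.e. the Q-linear extension of rho from G to L *)
Definition tensorQ_ext (G : {pred L}) (rho f : L -> 'M[subvs_of K]_degLK) : Prop :=
  [/\ forall x y, f (x + y) = f x + f y,
      forall (a : rat) x, f (a *: x) = (ratr a : subvs_of K) *: f x &
      {in G, forall x, f x = rho x}].

Definition Kalg_morph (phi : {rmorphism subvs_of K -> L})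
    (f : L -> 'M[subvs_of K]_degLK) : Prop :=
  [/\ f 1 = 1%:M,
      forall x y, f (x + y) = f x + f y,
      forall x y, f (x * y) = f x *m f y &
      forall (k : subvs_of K) x, f (phi k * x) = k *: f x].

Definition compatible (G : {pred L}) (phi : {rmorphism subvs_of K -> L})
    (rho : L -> 'M[subvs_of K]_degLK) : Prop :=
  exists f, tensorQ_ext G rho f /\ Kalg_morph phi f.

Definition unitR (u : 'M[subvs_of K]_degLK) : Prop :=
  [/\ u \in unitmx, mxOK u & mxOK (invmx u)].

End Defs.

From HB Require Import structures.
From mathcomp Require Import all_boot all_order all_algebra all_field.
Local Open Scope ring_scope.
Import GRing.Theory.

(* Extend rho Q-linearly along a Z-basis of the order to f : L -> M_n(K); as
   L is a field, f is an injective Q-algebra morphism.  For a nonzero row v,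
   x |-> v f(x) is an injective Q-linear map between L and K^n, which have the
   same Q-dimension [L:Q] = n [K:Q], so it is onto.  Writing k v = v f(x), the
   commutativity of f(L) gives w f(x) = k w for every row w = v f(y), i.e.
   f(x) = k.  Hence f(L) contains the scalar matrices and phi := f^-1 o scalar
   works; it is unique since every compatible extension of rho equals f, and
   conjugating f by a unit keeps it K-linear. *)

Section AdditiveOn.

Context {U V : zmodType} {G : {pred U}}.
Hypotheses (G0 : 0 \in G) (GB : {in G &, forall x y, x - y \in G}).
Context {rho : U -> V}.
Hypothesis rhoD : {in G &, {morph rho : x y / x + y}}.

Lemma memD_on : {in G &, forall x y, x + y \in G}.
Proof.
move=> x y Gx Gy; have -> : x + y = x - (0 - y) by rewrite sub0r opprK.
by apply: GB => //; apply: GB.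
Qed.

Lemma morph0_on : rho 0 = 0.
Proof. by apply/(addrI (rho 0)); rewrite -rhoD // !addr0. Qed.

Lemma morphB_on : {in G &, {morph rho : x y / x - y}}.
Proof.
move=> x y Gx Gy; have Gxy := GB _ _ Gx Gy.
by apply/(addIr (rho y)); rewrite -rhoD // !subrK.
Qed.

Lemma morphN_on x : x \in G -> - x \in G /\ rho (- x) = - rho x.
Proof.
move=> Gx; rewrite -[- x]sub0r GB // morphB_on // morph0_on.
by rewrite sub0r.
Qed.

Lemma morphMz_on x m : x \in G -> x *~ m \in G /\ rho (x *~ m) = rho x *~ m.
Proof.
move=> Gx; have morphMn k : x *+ k \in G /\ rho (x *+ k) = rho x *+ k.
  elim: k => [|k [Gk Rk]]; first by rewrite !mulr0n morph0_on.
  by rewrite !mulrS memD_on // rhoD // Rk.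
case: m => k; first exact: morphMn.
have [Gk Rk] := morphMn k.+1; have [GNk RNk] := morphN_on _ Gk.
by rewrite NegzE !mulrNz -!pmulrn RNk Rk.
Qed.

Lemma morph_sumMz_on (I : finType) (x : I -> U) (z : I -> int) :
  (forall i, x i \in G) -> rho (\sum_i x i *~ z i) = \sum_i rho (x i) *~ z i.
Proof.
move=> Gx; suff [] : \sum_i x i *~ z i \in G /\
  rho (\sum_i x i *~ z i) = \sum_i rho (x i) *~ z i by [].
apply: (big_ind2 (fun s t => s \in G /\ rho s = t)); first by rewrite morph0_on.
  by move=> s1 t1 s2 t2 [G1 <-] [G2 <-]; rewrite memD_on ?rhoD.
by move=> i _; apply: morphMz_on.
Qed.

End AdditiveOn.

Section RatLinear.

Context {L F : fieldExtType rat} {V : lmodType F}.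

Definition rat_scalable (h : L -> V) : Prop :=
  forall (a : rat) x, h (a *: x) = ratr a *: h x.

Context {N : nat}.
Variable b : N.-tuple L.
Hypothesis b_basis : basis_of fullv b.

Lemma rat_linear_coord_expand {h : L -> V} :
  {morph h : x y / x + y} -> rat_scalable h ->
  forall x, h x = \sum_i ratr (coord b i x) *: h b`_i.
Proof.
move=> hD hZ x; have h0 : h 0 = 0 by apply/(addrI (h 0)); rewrite -hD !addr0.
rewrite {1}(coord_basis b_basis (memvf x)) (big_morph h hD h0).
by apply: eq_bigr => i _; rewrite hZ.
Qed.

Lemma rat_linear_eq_basis {h1 h2 : L -> V} :
  {morph h1 : x y / x + y} -> rat_scalable h1 ->
  {morph h2 : x y / x + y} -> rat_scalable h2 ->
  (forall i : 'I_N, h1 b`_i = h2 b`_i) -> h1 =1 h2.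
Proof.
move=> h1D h1Z h2D h2Z eq_b x.
rewrite (rat_linear_coord_expand h1D h1Z) (rat_linear_coord_expand h2D h2Z).
by apply: eq_bigr => i _; rewrite eq_b.
Qed.

Definition rat_extension (rho : L -> V) (x : L) : V :=
  \sum_i ratr (coord b i x) *: rho b`_i.

Variable rho : L -> V.

Lemma rat_extensionD : {morph rat_extension rho : x y / x + y}.
Proof.
move=> x y; rewrite -big_split; apply: eq_bigr => i _ /=.
by rewrite linearD -!alg_num_field !scalerDl.
Qed.

Lemma rat_extensionZ : rat_scalable (rat_extension rho).
Proof.
move=> a x; rewrite scaler_sumr; apply: eq_bigr => i _ /=.
by rewrite linearZ -!alg_num_field scalerA -scalerAl mul1r scalerA.
Qed.

Lemma rat_extension_int_comb (z : 'I_N -> int) :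
  rat_extension rho (\sum_i (z i)%:~R *: b`_i) = \sum_(i < N) rho b`_i *~ z i.
Proof.
rewrite /rat_extension; apply: eq_bigr => i _.
by rewrite coord_sum_free ?(basis_free b_basis) // ratr_int scaler_int.
Qed.

End RatLinear.

Arguments rat_linear_eq_basis {L F V N b} b_basis {h1 h2}.

Lemma rat_linear_mulmx_basis {L F : fieldExtType rat} {n N : nat}
    {b : N.-tuple L} {f : L -> 'M[F]_n} :
  basis_of fullv b -> {morph f : x y / x + y} -> rat_scalable f ->
  (forall i j : 'I_N, f (b`_i * b`_j) = f b`_i *m f b`_j) ->
  {morph f : x y / x * y >-> x *m y}.
Proof.
move=> b_basis fD fZ fMb x y.
have fMr (j : 'I_N) : f (x * b`_j) = f x *m f b`_j.
  move: x; apply: (rat_linear_eq_basis b_basis) => [x1 x2|a x1|x1 x2|a x1|i].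
  - by rewrite mulrDl fD.
  - by rewrite -scalerAl fZ.
  - by rewrite fD mulmxDl.
  - by rewrite fZ scalemxAl.
  - exact: fMb.
move: y; apply: (rat_linear_eq_basis b_basis) => [y1 y2|a y1|y1 y2|a y1|j].
- by rewrite mulrDr fD.
- by rewrite -scalerAr fZ.
- by rewrite fD mulmxDr.
- by rewrite fZ scalemxAr.
- exact: fMr.
Qed.


Section Lattice.

Context {L : fieldExtType rat} {N : nat} {b : N.-tuple L} {G : {pred L}}.
Hypothesis memG :
  forall x, x \in G <-> exists z : 'I_N -> int, x = \sum_i (z i)%:~R *: b`_i.

Lemma lattice_mem0 : 0 \in G.
Proof.
by apply/memG; exists (fun=> 0); rewrite big1 // => i _; rewrite scale0r.
Qed.

Lemma lattice_memB : {in G &, forall x y, x - y \in G}.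
Proof.
move=> x y /memG[z ->] /memG[z' ->]; apply/memG; exists (fun i => z i - z' i).
by rewrite -sumrB; apply: eq_bigr => i _; rewrite intrB scalerBl.
Qed.

Lemma lattice_mem_basis (i : 'I_N) : b`_i \in G.
Proof.
apply/memG; exists (fun j => (j == i)%:R); rewrite (bigD1 i) //= eqxx scale1r.
by rewrite big1 ?addr0 // => j /negPf->; rewrite scale0r.
Qed.

Lemma rat_extension_lattice {F : fieldExtType rat} {V : lmodType F}
    {rho : L -> V} :
  basis_of fullv b -> {in G &, {morph rho : x y / x + y}} ->
  {in G, rat_extension b rho =1 rho}.
Proof.
move=> b_basis rhoD _ /memG[z ->]; rewrite rat_extension_int_comb //.
rewrite -(morph_sumMz_on lattice_mem0 lattice_memB rhoD) => [|i].
  by congr rho; apply: eq_bigr => i _; rewrite scaler_int.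
exact: lattice_mem_basis.
Qed.

End Lattice.

Section MatrixRepresentation.

Context {A F : fieldType} {n : nat} {f : A -> 'M[F]_n}.
Hypotheses (f1 : f 1 = 1%:M) (fD : {morph f : x y / x + y})
  (fM : {morph f : x y / x * y >-> x *m y}).

Lemma mx_rmorphB : {morph f : x y / x - y}.
Proof. by move=> x y; apply/(addIr (f y)); rewrite -fD !subrK. Qed.

Lemma row_mx_rmorph_inj (v : 'rV[F]_n) :
  v != 0 -> injective (fun x => v *m f x).
Proof.
move=> nz_v x y /= vfxy; apply/eqP; rewrite -subr_eq0.
apply: contraTT nz_v => nz_xy.
have : v *m f (x - y) = 0 by rewrite mx_rmorphB mulmxBr vfxy subrr.
move/(congr1 (mulmx^~ (f (x - y)^-1))).
by rewrite -mulmxA -fM mulfV // f1 mulmx1 mul0mx => ->; rewrite eqxx.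
Qed.

Lemma scalar_mx_in_image (v : 'rV[F]_n) :
  (forall w, exists x, v *m f x = w) -> forall k, exists x, f x = k%:M.
Proof.
move=> onto k; have [x vfx] := onto (k *: v); exists x.
apply/row_matrixP => i; rewrite !rowE; have [y <-] := onto (delta_mx 0 i).
by rewrite -mulmxA -fM mulrC fM mulmxA vfx mul_mx_scalar scalemxAl.
Qed.

Lemma rmorph_scalar_preimage :
  injective f -> (forall k, exists x, f x = k%:M) ->
  exists phi : {rmorphism F -> A}, forall k, f (phi k) = k%:M.
Proof.
move=> f_inj onto.
have onto_eq k : exists x, f x == k%:M.
  by have [x fx] := onto k; exists x; rewrite fx.
pose phi k := xchoose (onto_eq k).
have fphi k : f (phi k) = k%:M by apply/eqP/(xchooseP (onto_eq k)).
have phiB : zmod_morphism phi.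
  by move=> k l; apply: f_inj; rewrite mx_rmorphB !fphi raddfB.
have phiM : monoid_morphism phi.
  split=> [|k l]; apply: f_inj; first by rewrite fphi f1.
  by rewrite fM !fphi scalar_mxM.
pose phiR : {rmorphism F -> A} := HB.pack phi
  (GRing.isZmodMorphism.Build _ _ phi phiB)
  (GRing.isMonoidMorphism.Build _ _ phi phiM).
by exists phiR.
Qed.

End MatrixRepresentation.

Lemma inj_zmod_morphism_surj (U : vectType rat) (g : U -> U) :
  zmod_morphism g -> injective g -> forall y, exists x, g x = y.
Proof.
move=> gB g_inj y.
pose gL : {linear U -> U} := HB.pack g (GRing.isZmodMorphism.Build _ _ g gB)
  (GRing.isScalable.Build rat U U *:%R g (rat_linear gB)).
have /lker0_limgf img_full : lker (linfun gL) == 0%VS.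
  by apply/lker0P => x1 x2; rewrite !lfunE; apply: g_inj.
have : y \in limg (linfun gL) by rewrite img_full memvf.
by case/memv_imgP => x _ ->; exists x; rewrite lfunE.
Qed.

Section Dimension.

Context {L : fieldExtType rat} {K : {subfield L}}.

Lemma dim_fieldOver_fullv : \dim {:fieldOver K} = degLK K.
Proof.
have -> : (fullv : {vspace fieldOver K}) = vspaceOver K {:L}%AS.
  apply/vspaceP => v; rewrite memvf (mem_aspaceOver (subvf K)).
  exact/esym/memvf.
by rewrite dim_aspaceOver ?subvf.
Qed.

Lemma rV_degLK_inj_surj (h : L -> 'rV[subvs_of K]_(degLK K)) :
  zmod_morphism h -> injective h -> forall w, exists x, h x = w.
Proof.
move=> hB h_inj w.
have [e e_basis] : exists e : (degLK K).-tuple (fieldOver K), basis_of fullv e.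
  by rewrite -dim_fieldOver_fullv; exists (vbasis fullv); apply: vbasisP.
(* r identifies K^n with L through a K-basis of L, so r o h is an injective
   additive endomorphism of the Q-space L. *)
pose r (u : 'rV[subvs_of K]_(degLK K)) : L := \sum_i u 0 i *: e`_i.
have rB : zmod_morphism r.
  move=> u1 u2; rewrite /r -sumrB.
  by apply: eq_bigr => i _; rewrite !mxE scalerBl.
have r_inj : injective r.
  move=> u1 u2 /eqP; rewrite -subr_eq0 -rB => /eqP r0.
  apply/rowP => i; apply/eqP; rewrite -subr_eq0.
  have /freeP/(_ (fun j => (u1 - u2) 0 j) r0 i) := basis_free e_basis.
  by rewrite !mxE => ->.
have [x rhx] : exists x, r (h x) = r w.
  apply: inj_zmod_morphism_surj => [x1 x2 | x1 x2 /r_inj /h_inj //].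
  by rewrite /= hB rB.
by exists x; apply: r_inj.
Qed.

End Dimension.

Section Compatibility.

Context {L : fieldExtType rat} {K : {subfield L}} {G : {pred L}}.
Local Notation Mx := 'M[subvs_of K]_(degLK K).

Lemma degLK_gt0 : (0 < degLK K)%N.
Proof. by rewrite /degLK divn_gt0 ?adim_gt0 // dimvS // subvf. Qed.

Lemma Kmx_rmorph_scalar_preimage {f : L -> Mx} :
  f 1 = 1%:M -> {morph f : x y / x + y} -> {morph f : x y / x * y >-> x *m y} ->
  injective f /\
  exists phi : {rmorphism subvs_of K -> L}, forall k, f (phi k) = k%:M.
Proof.
move=> f1 fD fM; pose i0 := Ordinal degLK_gt0.
pose v : 'rV[subvs_of K]_(degLK K) := delta_mx 0 i0.
have v_nz : v != 0.
  apply/eqP => /rowP/(_ i0); rewrite !mxE !eqxx => /eqP.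
  by rewrite oner_eq0.
have fv_inj := row_mx_rmorph_inj f1 fD fM v v_nz.
have f_inj : injective f by move=> x y fxy; apply: fv_inj; rewrite /= fxy.
have fv_onto : forall w, exists x, v *m f x = w.
  apply: (rV_degLK_inj_surj _ _ fv_inj) => x y.
  by rewrite mx_rmorphB // mulmxBr.
split=> //; apply: (rmorph_scalar_preimage f1 fD fM f_inj).
exact: (scalar_mx_in_image fM v fv_onto).
Qed.

Lemma Kalg_morph_scalar {phi : {rmorphism subvs_of K -> L}} {f : L -> Mx} :
  Kalg_morph phi f -> forall k, f (phi k) = k%:M.
Proof. by case=> f1 _ _ fk k; rewrite -[phi k]mulr1 fk f1 scalemx1. Qed.

Lemma tensorQ_ext_unique {N : nat} {b : N.-tuple L} {rho f1 f2 : L -> Mx} :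
  basis_of fullv b -> (forall i : 'I_N, b`_i \in G) ->
  tensorQ_ext G rho f1 -> tensorQ_ext G rho f2 -> f1 =1 f2.
Proof.
move=> b_basis Gb [f1D f1Z f1G] [f2D f2Z f2G].
apply: (rat_linear_eq_basis b_basis f1D f1Z f2D f2Z) => i.
by rewrite f1G ?f2G ?Gb.
Qed.

Lemma compatible_conj (phi : {rmorphism subvs_of K -> L}) (rho : L -> Mx)
    (u : Mx) :
  u \in unitmx -> compatible G phi rho ->
  compatible G phi (fun x => u *m rho x *m invmx u).
Proof.
move=> u_unit [f [[fD fZ fG] [f1 _ fM fk]]].
exists (fun x => u *m f x *m invmx u); split; split.
- by move=> x y; rewrite fD mulmxDr mulmxDl.
- by move=> a x; rewrite fZ -scalemxAr -scalemxAl.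
- by move=> x Gx; rewrite fG.
- by rewrite f1 mulmx1 mulmxV.
- by move=> x y; rewrite fD mulmxDr mulmxDl.
- by move=> x y; rewrite fM !mulmxA mulmxKV.
- by move=> k x; rewrite fk -scalemxAr -scalemxAl.
Qed.

End Compatibility.

Theorem lemma10p4 (L : fieldExtType rat) (K : {subfield L}) (G : {pred L})
    (HG : is_order G) (rho : L -> 'M[subvs_of K]_(degLK K))
    (Hrho : ring_hom_order G rho) :
  exists phi : {rmorphism subvs_of K -> L},
    [/\ compatible G phi rho,
        forall psi : {rmorphism subvs_of K -> L},
          compatible G psi rho -> psi =1 phi &
        forall u : 'M[subvs_of K]_(degLK K), unitR u ->
          compatible G phi (fun x => u *m rho x *m invmx u)].
Proof.
case: HG => G1 GM [b [b_basis memG]]; case: Hrho => _ rho1 rhoD rhoM.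
pose f := rat_extension b rho.
have fD : {morph f : x y / x + y} := rat_extensionD b rho.
have fZ : rat_scalable f := rat_extensionZ b rho.
have fG : {in G, f =1 rho} := rat_extension_lattice memG b_basis rhoD.
have f_ext : tensorQ_ext G rho f by split.
have f1 : f 1 = 1%:M by rewrite fG.
have fM : {morph f : x y / x * y >-> x *m y}.
  apply: (rat_linear_mulmx_basis b_basis fD fZ) => i j.
  by rewrite !fG ?rhoM ?GM ?(lattice_mem_basis memG).
have [f_inj [phi fphi]] := Kmx_rmorph_scalar_preimage f1 fD fM.
have compat : compatible G phi rho.
  by exists f; split=> //; split=> // k x; rewrite fM fphi mul_scalar_mx.
exists phi; split=> // [psi [f' [f'_ext f'_alg]] k | u [u_unit _ _]].
  apply: f_inj; rewrite fphi -(Kalg_morph_scalar f'_alg).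
  exact: (tensorQ_ext_unique b_basis (lattice_mem_basis memG) f_ext f'_ext).
exact: compatible_conj.
Qed.
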